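(* Let $n\ge1$ and $\varepsilon_1,\dots,\varepsilon_n\in\{-1,1\}$ with at least one $\varepsilon_i=-1$. Put $a=n-\max\{i:\varepsilon_i=-1\}$. Then $\mathcal S(\varepsilon_1,\dots,\varepsilon_n,1)=(-1)^a\binom{n-1}{a}\,2^{\otimes n}$ in $V^{\otimes n}$.
   Context: Let $V=\mathbb Q^\times\otimes_{\mathbb Z}\mathbb Q$ (torsion, in particular $-1$, becomes $0$); for $f\in\mathbb Q^\times$ write $f$ for its image in $V$. Tensors in $V^{\otimes n}$ are multilinear in the multiplicative sense, and any formal tensor having the number $0$ as a factor is interpreted as $0$. $2^{\otimes n}=2\otimes\cdots\otimes2$. Define $\mu(x,y)=1-y/x$ if $x\ne0$, $\mu(0,y)=y$. For a tuple $(a_1,\dots,a_m)$, $m\ge2$ (the decorated polygon $P(a_1,\dots,a_m)$ with root decoration $a_m$, attached to $G(a_{m-1},\dots,a_1;a_m)$), define $\mathcal S(a_1,\dots,a_m)\in V^{\otimes(m-1)}$ by $\mathcal S(a_1,a_2)=\mu(a_1,a_2)$ and, for $m\ge3$, $\mathcal S(a_1,\dots,a_m)=\sum_{i=1}^{m-1}\mathcal S(a_1,\dots,\widehat{a_i},\dots,a_m)\otimes\mu(a_i,a_{i+1})-\sum_{i=2}^{m-1}\mathcal S(a_1,\dots,\widehat{a_i},\dots,a_m)\otimes\mu(a_i,a_{i-1})$. *)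

From HB Require Import structures.
From mathcomp Require Import all_boot all_order all_algebra.
Set Implicit Arguments. Unset Strict Implicit. Unset Printing Implicit Defensive.
Import Order.TTheory GRing.Theory Num.Theory.
Local Open Scope ring_scope.

(* Model of V = Q^x (x)_Z Q : the Q-vector space with basis e_p, p prime;
   the image of f in Q^x is sum_p v_p(f) e_p.  Hence V^{(x)n} has basis the
   words (p_1,...,p_n) of primes, and we represent an element of the tensor
   powers as a function  seq nat -> rat  (coefficient of each word).
   A word of length n only carries coefficients for elements of V^{(x)n}.
   Non-prime letters always get coefficient 0 since logn p _ = 0 then. *)
Definition tensor := seq nat -> rat.

(* p-adic valuation of a rational, as a rational; vq p 0 = 0, so any
   formal tensor with a factor 0 is 0 (matching the convention). *)
Definition vq (p : nat) (f : rat) : rat :=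
  ((Posz (logn p `|numq f|%N)) - (Posz (logn p `|denq f|%N)))%:~R.

Definition pt (l : seq rat) : tensor := fun w =>
  if size w == size l then \prod_(i < size l) vq (nth 0%N w i) (nth 0 l i)
  else 0.

Definition tens (X : tensor) (f : rat) : tensor := fun w =>
  if w is x :: w' then X (belast x w') * vq (last x w') f else 0.

Definition mu (x y : rat) : rat := if x == 0 then y else 1 - y / x.

Definition drop_at (i : nat) (a : seq rat) : seq rat :=
  take i a ++ drop i.+1 a.

(* S with fuel k (fuel = size a suffices) *)
Fixpoint Saux (k : nat) (a : seq rat) : tensor :=
  match k with
  | 0%N => fun _ => 0
  | k'.+1 =>
    if (size a <= 2)%N then
      (if size a == 2%N then pt [:: mu (nth 0 a 0) (nth 0 a 1)] else fun _ => 0)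
    else fun w =>
      \sum_(i < (size a).-1)
          tens (Saux k' (drop_at i a)) (mu (nth 0 a i) (nth 0 a i.+1)) w
      - \sum_(1 <= i < (size a).-1)
          tens (Saux k' (drop_at i a)) (mu (nth 0 a i) (nth 0 a i.-1)) w
  end.

Definition S (a : seq rat) : tensor := Saux (size a) a.

From HB Require Import structures.
From mathcomp Require Import all_boot all_order all_algebra.
From mathcomp Require Import zify ring.
Import Order.TTheory GRing.Theory Num.Theory.
Local Open Scope ring_scope.

(* Induct on the length of a sign sequence [a] whose last [-1] sits at position
   [k] and is followed by [s] entries [1]; the claim is
   S(a) = (-1)^s C(k+s, s) 2^{(x)(k+s+1)}.  On signs [mu x y] is [2] or [0]
   according as [x != y], so deleting [a_i] contributes [c_{i+1} - c_i] times
   the coefficient of the shortened sequence, [c_i] marking a sign change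
   between [a_{i-1}] and [a_i].  Deletions up to the last [-1] either vanish or
   give the shape [(k-1, s)] and telescope to its coefficient; deleting the [1]
   right after it gives the shape [(k, s-1)] with factor [-1]; all further
   terms vanish.  Pascal's rule closes the induction. *)

Lemma vq0 p : vq p 0 = 0.
Proof. by rewrite /vq /= logn0 logn1. Qed.

Lemma vq2 p : vq p 2 = (p == 2%N)%:R.
Proof.
rewrite /vq /= logn1 subr0; case: eqP => [-> //|p_neq2].
rewrite lognE; case: (boolP [&& _, _ & _]) => // /and3P[p_pr _ p_dvd2].
have := dvdn_leq (isT : (0 < 2)%N) p_dvd2; have := prime_gt1 p_pr; lia.
Qed.

Definition two_pow (j : nat) : tensor := fun w => (w == nseq j 2%N)%:R.

Lemma pt_nseq2 j w : pt (nseq j 2) w = two_pow j w.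
Proof.
rewrite /pt /two_pow size_nseq; case: eqP => [size_w|]; last first.
  by case: eqP => // ->; rewrite size_nseq.
under eq_bigr => i _ do rewrite nth_nseq ltn_ord vq2.
elim: j w size_w => [|j IHj] [|x w] //=; first by rewrite big_ord0.
case=> size_w; rewrite big_ord_recl /= IHj // eqseq_cons.
by case: (x == 2%N); rewrite ?mul1r ?mul0r.
Qed.

Lemma tens0 X w : tens X 0 w = 0.
Proof. by case: w => [|x w] //=; rewrite vq0 mulr0. Qed.

Lemma tens_two_pow X c j w : (forall v, X v = c * two_pow j v) ->
  tens X 2 w = c * two_pow j.+1 w.
Proof.
move=> X_eq; case: w => [|x w] /=; first by rewrite /two_pow mulr0.
rewrite X_eq vq2 /two_pow -mulrA -natrM; congr (_ * _%:R).
have -> : nseq j.+1 2%N = rcons (nseq j 2%N) 2%N by rewrite -cats1 -(nseqD j 1) addn1.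
by rewrite (lastI x w) eqseq_rcons mulnb.
Qed.

Lemma mu_xx x : mu x x = 0.
Proof. by rewrite /mu; case: eqP => [-> //|/eqP x_neq0]; rewrite divff ?subrr. Qed.

Lemma mu_sign x y : (x = 1 \/ x = -1) -> (y = 1 \/ y = -1) ->
  mu x y = (x != y)%:R * 2.
Proof.
have mu_1N1 : mu 1 (-1) = 2 by rewrite /mu oner_eq0 divr1 opprK.
have mu_N11 : mu (-1) 1 = 2 by rewrite /mu oppr_eq0 oner_eq0 invrN invr1 mulrN1 opprK.
by move=> [] -> [] ->; rewrite ?mu_xx ?eqxx ?mul0r ?mu_1N1 ?mu_N11 ?mul1r.
Qed.

Lemma tens_mu_sign X c j x y w : (forall v, X v = c * two_pow j v) ->
  (x = 1 \/ x = -1) -> (y = 1 \/ y = -1) ->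
  tens X (mu x y) w = (x != y)%:R * c * two_pow j.+1 w.
Proof.
move=> X_eq x_sign y_sign; rewrite mu_sign //.
by case: (x != y); rewrite ?mul0r ?tens0 // mul1r (tens_two_pow _ _ _ _ X_eq) mul1r.
Qed.

Lemma size_drop_at i a : (i < size a)%N -> size (drop_at i a) = (size a).-1.
Proof. by move=> lt_i; rewrite /drop_at size_cat size_take size_drop lt_i; lia. Qed.

Lemma nth_drop_at i a j : (i < size a)%N ->
  nth 0 (drop_at i a) j = nth 0 a (if (j < i)%N then j else j.+1).
Proof.
move=> lt_i; rewrite /drop_at nth_cat size_take lt_i.
by case: ltnP => le_ij; rewrite ?nth_take ?nth_drop //; congr nth; lia.
Qed.

Lemma S_pair x y : S [:: x; y] = pt [:: mu x y].
Proof. by []. Qed.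

Definition S_term (a : seq rat) (i : nat) : tensor := fun w =>
  tens (S (drop_at i a)) (mu (nth 0 a i) (nth 0 a i.+1)) w
  - tens (S (drop_at i a)) (mu (nth 0 a i) (nth 0 a i.-1)) w.

(* The second sum defining [S] may start at [i = 0]: there [i.-1 = 0], so the
   extra term carries the factor [mu a_0 a_0 = 0]. *)
Lemma S_rec a w : (2 < size a)%N ->
  S a w = \sum_(i < (size a).-1) S_term a i w.
Proof.
rewrite /S; case size_a: (size a) => [|m] // lt2m.
rewrite /= ifN ?size_a -?ltnNge //= /S_term.
rewrite big_split /= sumrN.
have S_drop i : (i < m)%N -> Saux m (drop_at i a) = S (drop_at i a).
  by move=> lt_im; rewrite /S size_drop_at size_a //; lia.
congr (_ - _); first by apply: eq_bigr => i _; rewrite S_drop.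
rewrite -(big_mkord xpredT (fun i => tens (S (drop_at i a)) (mu a`_i a`_i.-1) w)).
rewrite [RHS]big_ltn ?mu_xx ?tens0 ?add0r; last by lia.
by apply: eq_big_nat => i /andP[_ lt_im]; rewrite S_drop.
Qed.

Lemma S_const_eq0 c a w : (1 < size a)%N ->
  (forall i, (i < size a)%N -> nth 0 a i = c) -> S a w = 0.
Proof.
move=> gt1_size a_const.
have [size_a|gt2_size] : size a = 2%N \/ (2 < size a)%N by lia.
  case: a gt1_size size_a a_const => [|x [|y []]] // _ _ a_const.
  have [-> ->] : x = c /\ y = c by split; [exact: (a_const 0%N) | exact: (a_const 1%N)].
  by rewrite S_pair mu_xx /pt /=; case: eqP; rewrite ?big_ord1 ?vq0.
rewrite S_rec // big1 // => i _; rewrite /S_term.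
by rewrite !a_const ?mu_xx ?tens0 ?subr0 //; case: i => i /= lt_i; lia.
Qed.

Definition sign_seq (a : seq rat) :=
  forall i, (i < size a)%N -> nth 0 a i = 1 \/ nth 0 a i = -1.

Definition last_neg1_at (k : nat) (a : seq rat) :=
  nth 0 a k = -1 /\ forall j, (k < j < size a)%N -> nth 0 a j = 1.

Lemma sign_seq_drop_at i a : (i < size a)%N -> sign_seq a -> sign_seq (drop_at i a).
Proof.
move=> lt_i a_sign j; rewrite size_drop_at // nth_drop_at // => lt_j.
by apply: a_sign; case: ifP => _; lia.
Qed.

Lemma last_neg1_at_drop_lt i k a : (i < k)%N -> (k < size a)%N ->
  last_neg1_at k a -> last_neg1_at k.-1 (drop_at i a).
Proof.
move=> lt_ik lt_k [a_k a_gt]; have lt_i : (i < size a)%N by lia.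
split=> [|j]; rewrite nth_drop_at //.
  by rewrite ltnNge (_ : (i <= k.-1)%N) 1?prednK //; lia.
by rewrite size_drop_at // => lt_j; rewrite ltnNge (_ : (i <= j)%N) 1?a_gt //; lia.
Qed.

Lemma last_neg1_at_drop_last k a : (0 < k)%N -> (k < size a)%N ->
  nth 0 a k.-1 = -1 -> last_neg1_at k a -> last_neg1_at k.-1 (drop_at k a).
Proof.
move=> gt0_k lt_k a_pk [_ a_gt]; split=> [|j]; rewrite nth_drop_at //.
  by rewrite ltn_predL gt0_k.
by rewrite size_drop_at // => lt_j; rewrite ltnNge (_ : (k <= j)%N) 1?a_gt //; lia.
Qed.

Lemma last_neg1_at_drop_gt i k a : (k < i < size a)%N ->
  last_neg1_at k a -> last_neg1_at k (drop_at i a).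
Proof.
move=> /andP[lt_ki lt_i] [a_k a_gt]; split=> [|j]; rewrite nth_drop_at //.
  by rewrite lt_ki.
by rewrite size_drop_at // => lt_j; apply: a_gt; case: ifP; lia.
Qed.

Definition sign_change (a : seq rat) (i : nat) : rat :=
  (nth 0 a i != nth 0 a i.-1)%:R.

Lemma S_term_of_S_drop a i c j w : (i.+1 < size a)%N -> sign_seq a ->
  (forall v, S (drop_at i a) v = c * two_pow j v) ->
  S_term a i w = (sign_change a i.+1 - sign_change a i) * c * two_pow j.+1 w.
Proof.
move=> lt_i a_sign S_drop.
have sign_at l : (l <= i.+1)%N -> nth 0 a l = 1 \/ nth 0 a l = -1.
  by move=> le_l; apply: a_sign; lia.
rewrite /S_term /sign_change !(tens_mu_sign _ _ _ _ _ _ S_drop);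
  try by apply: sign_at; lia.
by rewrite eq_sym !mulrBl.
Qed.

Lemma S_term_eq0 a i w : nth 0 a i.-1 = nth 0 a i.+1 -> S_term a i w = 0.
Proof. by rewrite /S_term => ->; rewrite subrr. Qed.

Lemma sign_change_eq a i : nth 0 a i.-1 = nth 0 a i.+1 ->
  sign_change a i.+1 = sign_change a i.
Proof. by rewrite /sign_change /= eq_sym => ->. Qed.

Lemma sum_S_term_telescope a c j lo hi w : (lo <= hi)%N ->
  (forall i, (lo <= i < hi)%N ->
     S_term a i w = (sign_change a i.+1 - sign_change a i) * c * two_pow j w) ->
  \sum_(lo <= i < hi) S_term a i w
    = (sign_change a hi - sign_change a lo) * c * two_pow j w.
Proof.
move=> le_lohi S_term_eq; rewrite !mulrBl.
apply: (telescope_sumr_eq (fun i => sign_change a i * c * two_pow j w)) => //.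
by move=> i /S_term_eq ->; rewrite !mulrBl.
Qed.

Definition S_coef (k s : nat) : rat := (-1) ^+ s * ('C(k + s, s))%:R.

Lemma S_coef_rec k s : (0 < k + s)%N ->
  S_coef k s = (if k is k'.+1 then S_coef k' s else 0)
             - (if s is s'.+1 then S_coef k s' else 0).
Proof.
rewrite /S_coef; case: k => [|k]; case: s => [|s] //= _.
- by rewrite !add0n !binn exprS; ring.
- by rewrite !addn0 !bin0 subr0.
- by rewrite addSn binS natrD addnS exprS; ring.
Qed.

Section InductionStep.

Variables (m k s : nat) (a : seq rat).

Hypothesis IH : forall k' s' b, (k' + s')%N = m -> size b = m.+2 ->
  sign_seq b -> last_neg1_at k' b ->
  forall w, S b w = S_coef k' s' * two_pow m.+1 w.

Hypotheses (ks : (k + s)%N = m.+1) (size_a : size a = m.+3)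
  (a_sign : sign_seq a) (a_neg1 : last_neg1_at k a).

Lemma S_drop_at_IH i k' s' : (k' + s')%N = m -> (i < size a)%N ->
  last_neg1_at k' (drop_at i a) ->
  forall w, S (drop_at i a) w = S_coef k' s' * two_pow m.+1 w.
Proof.
move=> ks' lt_i drop_neg1; apply: IH => //; first by rewrite size_drop_at // size_a.
exact: sign_seq_drop_at.
Qed.

Lemma S_term_left i w : (i <= k)%N ->
  S_term a i w = (sign_change a i.+1 - sign_change a i)
                 * (if k is k'.+1 then S_coef k' s else 0) * two_pow m.+2 w.
Proof.
have [a_k a_gt] := a_neg1; have lt_k1 : (k.+1 < size a)%N by lia.
case: (posnP k) => [k0 | gt0_k] le_ik.
  have -> : i = 0%N by lia.
  rewrite k0 /=; apply: S_term_of_S_drop => [||v]; rewrite ?size_a //.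
  rewrite mul0r (S_const_eq0 1) //; rewrite size_drop_at ?size_a // => j lt_j.
  by rewrite nth_drop_at ?size_a //=; apply: a_gt; lia.
have -> : (if k is k'.+1 then S_coef k' s else 0) = S_coef k.-1 s.
  by rewrite -[in LHS](prednK gt0_k).
have [lt_ik | ->] : (i < k)%N \/ i = k by lia.
  apply: S_term_of_S_drop => //; first by lia.
  apply: (S_drop_at_IH _ k.-1 s); [lia | lia |].
  by apply: last_neg1_at_drop_lt => //; lia.
have [a_pk | a_pk] := a_sign k.-1 (leq_ltn_trans (leq_pred k) (ltnW lt_k1)).
  have a_flat : nth 0 a k.-1 = nth 0 a k.+1 by rewrite a_pk a_gt //; lia.
  by rewrite S_term_eq0 // sign_change_eq // subrr !mul0r.
apply: S_term_of_S_drop => //.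
apply: (S_drop_at_IH _ k.-1 s); [lia | lia |].
by apply: last_neg1_at_drop_last => //; exact: ltnW.
Qed.

Lemma S_term_right i w : (k < i < m.+2)%N ->
  S_term a i w = (sign_change a i.+1 - sign_change a i)
                 * (if s is s'.+1 then S_coef k s' else 0) * two_pow m.+2 w.
Proof.
have [a_k a_gt] := a_neg1; move=> /andP[lt_ki lt_im].
have gt0_s : (0 < s)%N by lia.
have -> : (if s is s'.+1 then S_coef k s' else 0) = S_coef k s.-1.
  by rewrite -[in LHS](prednK gt0_s).
have [-> | lt_k1i] : i = k.+1 \/ (k.+1 < i)%N by lia.
  apply: S_term_of_S_drop => //; first by lia.
  apply: (S_drop_at_IH _ k s.-1); [lia | lia |].
  by apply: last_neg1_at_drop_gt => //; lia.
have a_flat : nth 0 a i.-1 = nth 0 a i.+1 by rewrite !a_gt //; lia.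
by rewrite S_term_eq0 // sign_change_eq // subrr !mul0r.
Qed.

Lemma S_step w : S a w = S_coef k s * two_pow m.+2 w.
Proof.
have [a_k a_gt] := a_neg1; have lt_k1 : (k.+1 < size a)%N by lia.
have sign_change0 : sign_change a 0 = 0 by rewrite /sign_change eqxx.
have sign_change_k1 : sign_change a k.+1 = 1.
  by rewrite /sign_change /= a_k a_gt //; lia.
rewrite S_rec; last by rewrite size_a.
rewrite -(big_mkord xpredT (fun i => S_term a i w)) size_a /=.
rewrite (big_cat_nat _ (n := k.+1)) //=; last by lia.
rewrite (sum_S_term_telescope a (if k is k'.+1 then S_coef k' s else 0) m.+2) //;
  last by move=> i /andP[_ lt_ik]; apply: S_term_left.
rewrite (sum_S_term_telescope a (if s is s'.+1 then S_coef k s' else 0) m.+2);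
  [| lia | by move=> i; apply: S_term_right].
rewrite sign_change0 sign_change_k1 subr0 mul1r (S_coef_rec k s); last by lia.
case: (posnP s) => [s0 | gt0_s]; first by rewrite s0 /= !mulr0 mul0r addr0 subr0.
have -> : sign_change a m.+2 = 0 by rewrite /sign_change /= !a_gt ?eqxx //; lia.
by rewrite sub0r mulN1r mulNr mulrBl.
Qed.

End InductionStep.

Lemma S_sign_seq k s a : size a = (k + s).+2 -> sign_seq a -> last_neg1_at k a ->
  forall w, S a w = S_coef k s * two_pow (k + s).+1 w.
Proof.
move ks: (k + s)%N => m; elim: m k s a ks => [|m IH] k s a ks size_a a_sign a_neg1 w.
  have [k0 s0] : k = 0%N /\ s = 0%N by lia.
  subst k s; case: a size_a a_sign a_neg1 => [|x [|y []]] // _ _ [/= -> y_eq].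
  have /= -> := y_eq 1%N isT.
  rewrite S_pair mu_sign; [|by right|by left].
  by rewrite (_ : (-1 : rat) != 1) // -pt_nseq2 /S_coef /= !mul1r.
exact: (S_step _ _ _ _ IH ks size_a a_sign a_neg1).
Qed.

Theorem mainTheorem5 (n : nat) (eps : seq rat) (k : nat) :
  (1 <= n)%N ->
  size eps = n ->
  (forall i, (i < n)%N -> nth 0 eps i = 1 \/ nth 0 eps i = -1) ->
  (k < n)%N ->
  nth 0 eps k = -1 ->
  (forall j, (k < j < n)%N -> nth 0 eps j = 1) ->
  forall w : seq nat,
    S (rcons eps 1) w
    = (-1) ^+ (n - k.+1) * ('C(n.-1, n - k.+1))%:R * pt (nseq n 2) w.
Proof.
move=> _ size_eps eps_sign lt_kn eps_k eps_gt w.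
have nth_last j : (j < n.+1)%N ->
    nth 0 (rcons eps 1) j = if (j < n)%N then nth 0 eps j else 1.
  move=> lt_j; rewrite nth_rcons size_eps; case: ltnP => // le_nj.
  by rewrite ifT //; apply/eqP; lia.
have ks : (k + (n - k.+1)).+1 = n by lia.
rewrite pt_nseq2 -[in two_pow n]ks (S_sign_seq k (n - k.+1)) ?size_rcons ?size_eps ?ks //.
- by rewrite /S_coef (_ : (k + (n - k.+1))%N = n.-1) //; lia.
- move=> i; rewrite size_rcons size_eps => lt_i; rewrite nth_last //.
  by case: ifP => [/eps_sign|]; [|left].
- split=> [|j]; first by rewrite nth_last ?lt_kn //; lia.
  rewrite size_rcons size_eps => /andP[lt_kj lt_j]; rewrite nth_last //.
  by case: ifP => // lt_jn; apply: eps_gt; rewrite lt_kj.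
Qed.
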